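(* Let $G$ be a multigraph with $V(G)=S\cup\mathcal{T}$, $S\cap\mathcal{T}=\emptyset$, where every terminal in $\mathcal{T}$ has degree exactly one and is adjacent to a vertex of $S$, $G[S]$ is connected, and $k=|\partial(S)|=|\mathcal{T}|\ge 3$. Then $S$ can be partitioned into at most $k-2$ sets, each of which is connectivity-$2$ linked in $G$.
   Context: For disjoint vertex sets $A,B$, $E_G(A,B)$ is the set of edges with one endpoint in $A$ and the other in $B$; for $Y\subseteq V(G)$, $\partial(Y)=E_G(Y,V(G)\setminus Y)$. A set $X\subseteq S$ is connectivity-$c$ linked in $G$ if for every pair of disjoint sets $A,B$ with $A\cup B=X$ we have $|E_G(A,B)|\ge \min\big(|\partial(A)\cap\partial(X)|,\ |\partial(B)\cap\partial(X)|,\ c\big)$. *)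

(* A multigraph is given by a finite vertex type V, a finite
   edge type E and two endpoint maps src tgt : E -> V (parallel edges and
   loops allowed). *)
From mathcomp Require Import all_boot.
Set Implicit Arguments. Unset Strict Implicit. Unset Printing Implicit Defensive.

Section Multigraph.
Variables (V E : finType) (src tgt : E -> V).

Definition edges_between (A B : {set V}) : {set E} :=
  [set e | ((src e \in A) && (tgt e \in B)) || ((src e \in B) && (tgt e \in A))].

Definition bnd (Y : {set V}) : {set E} := edges_between Y (~: Y).

(* degree of v (a loop counts twice) *)
Definition deg (v : V) : nat :=
  #|[set e | src e == v]| + #|[set e | tgt e == v]|.

Definition adj (u v : V) : bool :=
  [exists e, ((src e == u) && (tgt e == v)) || ((src e == v) && (tgt e == u))].

Definition induced_rel (S : {set V}) : rel V :=
  fun u v => [&& u \in S, v \in S & adj u v].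

Definition induced_connected (S : {set V}) : Prop :=
  S != set0 /\ forall u v, u \in S -> v \in S -> connect (induced_rel S) u v.

Definition conn_linked (c : nat) (X : {set V}) : Prop :=
  forall A B : {set V}, [disjoint A & B] -> A :|: B = X ->
    minn (minn #|bnd A :&: bnd X| #|bnd B :&: bnd X|) c <= #|edges_between A B|.

End Multigraph.

From mathcomp Require Import all_boot zify.
Set Implicit Arguments. Unset Strict Implicit. Unset Printing Implicit Defensive.

(* Only two facts about S are used: every bipartition of S is crossed by an
   edge, and k = |bnd S| >= 3.  Induct on |X|: if X
   is not 2-linked, some bipartition A, B of X has |E(A,B)| below
   min(|bnd A ∩ bnd X|, |bnd B ∩ bnd X|, 2).  Connectivity forces
   |E(A,B)| = 1, hence both sides meet bnd X in at least 2 edges, so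
   |bnd A|, |bnd B| >= 3, both parts stay connected, and
   (|bnd A| - 2) + (|bnd B| - 2) = |bnd X| - 2. *)

Section CutConnectivity.
Variables (V E : finType) (src tgt : E -> V).
Local Notation edges_between := (edges_between src tgt).
Local Notation bnd := (bnd src tgt).

Definition cut_connected (X : {set V}) : Prop :=
  forall A B : {set V}, [disjoint A & B] -> A :|: B = X ->
    A != set0 -> B != set0 -> edges_between A B != set0.

Lemma edges_betweenC (A B : {set V}) : edges_between A B = edges_between B A.
Proof. by apply/setP => e; rewrite !inE orbC. Qed.

Lemma edges_betweenUr (A B C : {set V}) :
  edges_between A (B :|: C) = edges_between A B :|: edges_between A C.
Proof.
apply/setP => e; rewrite !inE.
by case: (src e \in A); case: (src e \in B); case: (src e \in C);
   case: (tgt e \in A); case: (tgt e \in B); case: (tgt e \in C).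
Qed.

Lemma edges_betweenUl (A B C : {set V}) :
  edges_between (A :|: B) C = edges_between A C :|: edges_between B C.
Proof. by rewrite edges_betweenC edges_betweenUr !(edges_betweenC C). Qed.

Lemma bnd_set0 : bnd set0 = set0.
Proof. by apply/setP => e; rewrite !inE. Qed.

Lemma neq0_card_bnd (A : {set V}) : 0 < #|bnd A| -> A != set0.
Proof. by apply: contraTneq => ->; rewrite bnd_set0 cards0. Qed.

Lemma card_bndU (A B : {set V}) : [disjoint A & B] ->
  #|bnd (A :|: B)| = #|bnd A :&: bnd (A :|: B)| + #|bnd B :&: bnd (A :|: B)|.
Proof.
rewrite -setI_eq0 => /eqP dAB.
rewrite -(cardsID (bnd A) (bnd (A :|: B))) setIC; congr (_ + _); apply: eq_card => e.
have nsrc : (src e \in A) && (src e \in B) = false by rewrite -in_setI dAB inE.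
have ntgt : (tgt e \in A) && (tgt e \in B) = false by rewrite -in_setI dAB inE.
move: nsrc ntgt; rewrite !inE.
by case: (src e \in A); case: (src e \in B); case: (tgt e \in A); case: (tgt e \in B).
Qed.

Lemma card_bnd_split (A B : {set V}) : [disjoint A & B] ->
  #|bnd A| = #|bnd A :&: bnd (A :|: B)| + #|edges_between A B|.
Proof.
rewrite -setI_eq0 => /eqP dAB.
rewrite -(cardsID (bnd (A :|: B)) (bnd A)); congr (_ + _); apply: eq_card => e.
have nsrc : (src e \in A) && (src e \in B) = false by rewrite -in_setI dAB inE.
have ntgt : (tgt e \in A) && (tgt e \in B) = false by rewrite -in_setI dAB inE.
move: nsrc ntgt; rewrite !inE.
by case: (src e \in A); case: (src e \in B); case: (tgt e \in A); case: (tgt e \in B).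
Qed.

Lemma cut_connected_part (A B : {set V}) :
  cut_connected (A :|: B) -> [disjoint A & B] -> #|edges_between A B| <= 1 ->
  cut_connected A.
Proof.
move=> cAB dAB smallAB A1 A2 d12 defA n1 n2; apply/negP => /eqP no12.
have cross (C D : {set V}) : [disjoint C & D] -> C :|: D = A ->
    C != set0 -> D != set0 -> edges_between C D = set0 -> edges_between C B != set0.
  move=> dCD defCD nC nD noCD.
  have dCB : [disjoint C & B] by apply: disjointWl dAB; rewrite -defCD subsetUl.
  have dCDB : [disjoint C & D :|: B].
    by rewrite -setI_eq0 setIUr (disjoint_setI0 dCD) (disjoint_setI0 dCB) setU0.
  have := cAB C (D :|: B) dCDB; rewrite setUA defCD edges_betweenUr noCD set0U.
  by apply; rewrite // setU_eq0 negb_and nD.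
have cross1 := cross A1 A2 d12 defA n1 n2 no12.
have cross2 : edges_between A2 B != set0.
  by apply: (cross A2 A1); rewrite 1?disjoint_sym 1?setUC // edges_betweenC.
have d1B : [disjoint A1 & B] by apply: disjointWl dAB; rewrite -defA subsetUl.
have disj12 : edges_between A1 B :&: edges_between A2 B = set0.
  apply/setP => e; rewrite !inE.
  case s1: (src e \in A1); case t1: (tgt e \in A1);
  rewrite ?(disjointFr d12 s1) ?(disjointFr d12 t1) ?(disjointFr d1B s1)
          ?(disjointFr d1B t1) //= ?andbF //.
move: smallAB; rewrite -defA edges_betweenUl cardsU disj12 cards0 subn0.
by move: cross1 cross2; rewrite -!card_gt0; lia.
Qed.

Lemma path_exit (T : Type) (r : rel T) (A : {pred T}) x p :
  path r x p -> x \in A -> last x p \notin A ->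
  exists y z, [/\ r y z, y \in A & z \notin A].
Proof.
elim: p x => [|y p IHp] x /=; first by move=> _ ->.
move=> /andP[rxy pp] Ax; case Ay: (y \in A); first exact: IHp.
by exists x, y; rewrite Ay.
Qed.

Lemma induced_connected_cut (S : {set V}) :
  induced_connected src tgt S -> cut_connected S.
Proof.
move=> [_ connS] A B dAB defS /set0Pn[u uA] /set0Pn[v vB].
have [uS vS] : u \in S /\ v \in S by rewrite -defS !inE uA vB orbT.
have /connectP[p pp lastp] := connS u v uS vS.
have vA : last u p \notin A by rewrite -lastp (disjointFl dAB vB).
have [x [y [/and3P[xS yS /existsP[e exy]] xA yA]]] := path_exit pp uA vA.
have yB : y \in B by move: yS; rewrite -defS inE (negbTE yA).
apply/set0Pn; exists e; rewrite inE.
by case/orP: exy => /andP[/eqP-> /eqP->]; rewrite xA yB ?orbT.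
Qed.

Lemma conn_linkedVcut (c : nat) (X : {set V}) :
  conn_linked src tgt c X \/
  exists A B : {set V}, [/\ [disjoint A & B], A :|: B = X &
    #|edges_between A B| < minn (minn #|bnd A :&: bnd X| #|bnd B :&: bnd X|) c].
Proof.
have [/forallP linked | /forallPn[A /forallPn[B]]] := boolP [forall A : {set V},
  forall B : {set V}, [disjoint A & B] ==> (A :|: B == X) ==>
    (minn (minn #|bnd A :&: bnd X| #|bnd B :&: bnd X|) c <= #|edges_between A B|)].
  left=> A B dAB defX.
  by move/forallP/(_ B)/implyP/(_ dAB)/implyP: (linked A); apply; apply/eqP.
rewrite !negb_imply -ltnNge => /and3P[dAB /eqP defX cut].
by right; exists A, B.
Qed.

Lemma partitionU (T : finType) (P Q : {set {set T}}) (A B : {set T}) :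
  partition P A -> partition Q B -> [disjoint A & B] -> partition (P :|: Q) (A :|: B).
Proof.
move=> /and3P[/eqP covP trivP nP0] /and3P[/eqP covQ trivQ nQ0] dAB.
rewrite /partition /cover bigcup_setU -/(cover P) -/(cover Q) covP covQ eqxx.
by rewrite trivIsetU ?covP ?covQ // inE negb_or nP0 nQ0.
Qed.

Lemma cut_split (A B : {set V}) :
  cut_connected (A :|: B) -> [disjoint A & B] ->
  #|edges_between A B| < minn (minn #|bnd A :&: bnd (A :|: B)| #|bnd B :&: bnd (A :|: B)|) 2 ->
  [/\ cut_connected A, cut_connected B, 3 <= #|bnd A|, 3 <= #|bnd B|
    & #|bnd A| + #|bnd B| = #|bnd (A :|: B)| + 2].
Proof.
move=> cAB dAB small.
have dBA : [disjoint B & A] by rewrite disjoint_sym.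
have splitA := card_bnd_split dAB.
have splitB := card_bnd_split dBA.
rewrite setUC edges_betweenC in splitB.
have splitAB := card_bndU dAB.
have nA : A != set0 by apply: neq0_card_bnd; lia.
have nB : B != set0 by apply: neq0_card_bnd; lia.
have crossAB : 0 < #|edges_between A B| by rewrite card_gt0; exact: cAB.
have oneAB : #|edges_between A B| = 1 by lia.
split; [| | lia..].
- by apply: cut_connected_part cAB dAB _; rewrite oneAB.
- by apply: cut_connected_part dBA _; rewrite 1?setUC // edges_betweenC oneAB.
Qed.

Lemma cut_connected_linked_partition (X : {set V}) :
  cut_connected X -> 3 <= #|bnd X| ->
  exists P : {set {set V}}, [/\ partition P X, #|P| <= #|bnd X| - 2
    & forall Y, Y \in P -> conn_linked src tgt 2 Y].
Proof.
have [n] := ubnP #|X|; elim: n X => // n IHn X ltXn cX bnd3.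
have [linked | [A [B [dAB defX cut]]]] := conn_linkedVcut 2 X.
  have nX : X != set0 by apply: neq0_card_bnd; lia.
  exists [set X]; split=> [||Y /set1P-> //].
  - by rewrite /partition cover1 eqxx trivIset1 inE eq_sym.
  - by rewrite cards1; lia.
subst X; have [cA cB bndA bndB sumAB] := cut_split cX dAB cut.
have gtA : 0 < #|A| by rewrite card_gt0 neq0_card_bnd //; lia.
have gtB : 0 < #|B| by rewrite card_gt0 neq0_card_bnd //; lia.
move: ltXn; rewrite cardsU (disjoint_setI0 dAB) cards0 subn0 => ltABn.
have [ltAn ltBn] : #|A| < n /\ #|B| < n by lia.
have [PA [partA cardPA linkedA]] := IHn A ltAn cA bndA.
have [PB [partB cardPB linkedB]] := IHn B ltBn cB bndB.
exists (PA :|: PB); split.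
- exact: partitionU.
- by apply: leq_trans (leq_card_setU PA PB).1 _; lia.
- by move=> Y /setUP[/linkedA | /linkedB].
Qed.

End CutConnectivity.

Theorem mainTheorem3 (V E : finType) (src tgt : E -> V) (S T : {set V}) (k : nat) :
  [disjoint S & T] -> S :|: T = [set: V] ->
  (forall t, t \in T -> deg src tgt t = 1 /\ exists2 s, s \in S & adj src tgt t s) ->
  induced_connected src tgt S ->
  k = #|bnd src tgt S| -> k = #|T| -> 3 <= k ->
  exists P : {set {set V}},
    [/\ partition P S, #|P| <= k - 2 & forall X, X \in P -> conn_linked src tgt 2 X].
Proof.
move=> _ _ _ connS -> _ bnd3.
exact: cut_connected_linked_partition (induced_connected_cut connS) bnd3.
Qed.
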